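(* Let $\mathcal{D}=(V,\Phi)$ be a finite directed graph with adjacency matrix $M\in\{0,1\}^{V\times V}$ ($M_{vw}=1$ iff $(v,w)\in\Phi$). Let $\boldsymbol{\alpha}(t),\boldsymbol{\beta}(t)\in[0,+\infty)^V$ ($t\ge0$) be vector sequences such that $\boldsymbol{\alpha}(t)$ is non-decreasing in every component and $\boldsymbol{\beta}(t)$ is convergent, and let $\mathbf{r},\mathbf{s}\in(0,+\infty)^V$ with $r_v=s_v^{-1}$ for all $v$. Set $W_{vw}=r_vM_{vw}s_w$. Define $\boldsymbol{\omega}(t),\boldsymbol{\eta}(t)$ by $\boldsymbol{\omega}(0)=\boldsymbol{\eta}(0)=\mathbf{1}$ and, for all $v\in V$, $t\ge0$, $$\omega_v(t+1)=\frac{1}{1+\alpha_v(t)+\sum_{w}W_{vw}(1-\omega_w(t))},\qquad \eta_v(t+1)=1+\beta_v(t)+\sum_w M_{vw}\,\omega_w(t)\,\eta_w(t).$$ If $\mathcal{D}$ is strongly connected and there exists $v\in V$ such that the sequence $\alpha_v(t)$ is not identically zero, then the sequences $\boldsymbol{\omega}(t)$ and $\boldsymbol{\eta}(t)$ converge. Moreover, for every $u\in V$ the sequence $\omega_u(t)$ is non-increasing and its limit satisfies $\omega_u(\infty)<1$.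
   Context: $\mathcal{D}$ is strongly connected if for every pair $v,w\in V$ there is a directed path from $v$ to $w$ and one from $w$ to $v$. *)

From HB Require Import structures.
From mathcomp Require Import all_boot all_order all_algebra.
From mathcomp Require Import all_classical all_reals all_analysis.
Set Implicit Arguments. Unset Strict Implicit. Unset Printing Implicit Defensive.
Import Order.TTheory GRing.Theory Num.Theory.
Local Open Scope ring_scope.

Section Defs.
Variables (R : realType) (V : finType).

Definition adjM (Phi : rel V) (v w : V) : R := (Phi v w)%:R.

Definition strongly_connected (Phi : rel V) : Prop :=
  forall v w : V, connect Phi v w /\ connect Phi w v.

Definition Wmat (Phi : rel V) (r s : V -> R) (v w : V) : R :=
  r v * adjM Phi v w * s w.

Fixpoint omega_seq (Phi : rel V) (r s : V -> R) (alpha : nat -> V -> R)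
    (t : nat) : V -> R :=
  match t with
  | 0 => fun _ => 1
  | t'.+1 => fun v =>
      (1 + alpha t' v
         + \sum_(w : V) Wmat Phi r s v w * (1 - omega_seq Phi r s alpha t' w))^-1
  end.

Fixpoint eta_seq (Phi : rel V) (r s : V -> R) (alpha beta : nat -> V -> R)
    (t : nat) : V -> R :=
  match t with
  | 0 => fun _ => 1
  | t'.+1 => fun v =>
      1 + beta t' v
        + \sum_(w : V) adjM Phi v w * omega_seq Phi r s alpha t' w
                         * eta_seq Phi r s alpha beta t' w
  end.

End Defs.

From HB Require Import structures.
From mathcomp Require Import all_boot all_order all_algebra.
From mathcomp Require Import all_classical all_reals all_analysis.
From mathcomp Require Import lra ring.
Import Order.TTheory GRing.Theory Num.Theory numFieldNormedType.Exports.
Local Open Scope classical_set_scope.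
Local Open Scope ring_scope.

(* ω is non-increasing because α is non-decreasing, so it converges to some
   ω∞ with values in [0, 1]; passing to the limit in the recursion gives
   ω∞_v (1 + α_v(t) + Σ_w W_vw (1 - ω∞_w)) <= 1 for every t.  Hence ω∞ < 1
   at a vertex where α does not vanish, and from there, backwards along arcs,
   at every vertex.
   For η we work with ζ = ω η, which satisfies the affine recursion
   ζ(t+1) = ω(t+1) (1 + β(t)) + diag(ω(t+1)) M ζ(t).  Multiplied by s_v, the
   inequality above says that u = s (1 - ω∞) satisfies diag(ω∞) M u <= u,
   strictly where α > 0 or ω∞ = 0 (using ζ rather than η avoids dividing by
   ω∞, which may vanish).  Strong connectivity turns u into a positive y with
   diag(ω∞) M y < y, so the recursion matrices are eventually contractions for
   the sup norm weighted by y.  Thus ζ is Cauchy, and η(t+1) = 1 + β(t) + M ζ(t)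
   converges. *)

Section Sequences.
Context {R : realType}.

Lemma ler_sum_term {I : finType} (F : I -> R) j :
  (forall i, 0 <= F i) -> F j <= \sum_i F i.
Proof. by move=> F0; rewrite (bigD1 j) //= lerDl sumr_ge0. Qed.

Lemma near_oo2P (P : nat -> nat -> Prop) :
  (\forall m & n \near \oo, P m n) <->
  exists N, forall m n, (N <= m)%N -> (N <= n)%N -> P m n.
Proof.
split=> [[[A B] /= [[NA _ HA] [NB _ HB]] AB] | [N HN]].
  exists (maxn NA NB) => m n hm hn; apply: (AB (m, n)); split.
  - by apply: HA; apply: leq_trans hm; exact: leq_maxl.
  - by apply: HB; apply: leq_trans hn; exact: leq_maxr.
by exists ([set m | (N <= m)%N], [set n | (N <= n)%N]) => [|[m n] [] /=];
  [split; exists N | exact: HN].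
Qed.

Lemma cauchy_le_cvgn (u : nat -> R) :
  (forall e, 0 < e -> \forall m & n \near \oo, `|u m - u n| <= e) -> cvgn u.
Proof.
move=> Cu; apply/cauchy_cvgP/cauchy_ballP => e e0; rewrite near_map2.
apply: filterS (Cu _ (divr_gt0 e0 (ltr0Sn R 1))) => -[m n] /=.
rewrite -ball_normE /= => /le_lt_trans; apply; lra.
Qed.

Lemma cvg_sumr (T : Type) (F : set_system T) (FF : Filter F) (I : finType)
    (f : I -> T -> R) (l : I -> R) :
  (forall i, f i x @[x --> F] --> l i) ->
  \sum_i f i x @[x --> F] --> \sum_i l i.
Proof. by move=> fl; apply: (cvg_big add_continuous) => // i _; exact: fl. Qed.

Lemma cvg_pair_sub0 (u : nat -> R) :
  cvgn u -> u mn.1 - u mn.2 @[mn --> (\oo, \oo)] --> 0.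
Proof.
move=> /cvg_ex[l ul]; rewrite -(subrr l).
by apply: cvgB; [exact: cvg_comp cvg_fst ul | exact: cvg_comp cvg_snd ul].
Qed.

End Sequences.

Section ScalarRecursions.
Context {R : realType}.

Lemma affine_ineq_bounded (u : nat -> R) (lam B : R) (T : nat) :
  0 <= lam < 1 -> (forall t, (T <= t)%N -> u t.+1 <= B + lam * u t) ->
  exists K, forall t, (T <= t)%N -> u t <= K.
Proof.
move=> /andP[lam_ge0 lam_lt1] uS; exists (Num.max (u T) (B / (1 - lam))).
have BK : B <= (1 - lam) * Num.max (u T) (B / (1 - lam)).
  by rewrite mulrC -ler_pdivrMr ?subr_gt0 // le_max lexx orbT.
move=> t /subnK <-; elim: (t - T)%N => [|k IH]; first by rewrite le_max lexx.
rewrite addSn; apply: le_trans (uS _ (leq_addl _ _)) _.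
have := ler_wpM2l lam_ge0 IH; lra.
Qed.

Lemma contraction_pair_small (D : nat -> nat -> R) (lam K : R) :
  0 <= lam < 1 -> (\forall m & n \near \oo, D m n <= K) ->
  (forall d, 0 < d -> \forall m & n \near \oo, D m.+1 n.+1 <= lam * D m n + d) ->
  forall e, 0 < e -> \forall m & n \near \oo, D m n <= e.
Proof.
move=> /andP[lam_ge0 lam_lt1] /near_oo2P[N0 DK] Dcontr e e0.
have [k _ lamkK] : \forall k \near \oo, lam ^+ k * K <= e / 2.
  apply: (@cvgr_le _ _ _ _ _ 0); last lra.
  rewrite -(mul0r K); apply: cvgM (cvg_cst _); apply: cvg_expr.
  by rewrite ger0_norm.
have /near_oo2P[N1 DS] : \forall m & n \near \oo,
    D m.+1 n.+1 <= lam * D m n + (1 - lam) * (e / 2).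
  by apply: Dcontr; apply: mulr_gt0; lra.
pose N := maxn N0 N1.
have DN j m n : (N + j <= m)%N -> (N + j <= n)%N ->
    D m n <= lam ^+ j * K + e / 2.
  elim: j m n => [|j IH] m n; rewrite ?addn0 => hm hn.
    rewrite expr0 mul1r; have := DK m n (leq_trans (leq_maxl _ _) hm)
      (leq_trans (leq_maxl _ _) hn); lra.
  case: m hm => [|m]; first by rewrite addnS.
  case: n hn => [|n]; first by rewrite addnS.
  rewrite addnS !ltnS => hn hm.
  have N1_le p : (N + j <= p)%N -> (N1 <= p)%N :=
    leq_trans (leq_trans (leq_maxr N0 N1) (leq_addr j N)).
  apply: le_trans (DS _ _ (N1_le _ hm) (N1_le _ hn)) _.
  have := ler_wpM2l lam_ge0 (IH _ _ hm hn); rewrite exprS; lra.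
apply/near_oo2P; exists (N + k)%N => m n hm hn.
have := DN k m n hm hn; have := lamkK k (leqnn k); lra.
Qed.

End ScalarRecursions.

Section WeightedSupNorm.
Context {R : realType} {V : finType} (y : V -> R).
Hypothesis y_gt0 : forall v, 0 < y v.

Definition wnorm (f : V -> R) : R := \big[Num.max/0]_v (`|f v| / y v).

Lemma wnorm_ge0 f : 0 <= wnorm f.
Proof.
apply: (big_ind (fun a => 0 <= a)) => // [a c a0 _ | v _]; first by rewrite le_max a0.
by rewrite divr_ge0 // ltW.
Qed.

Lemma ler_wnorm f v : `|f v| <= wnorm f * y v.
Proof. by rewrite -ler_pdivrMr //; exact: (le_bigmax 0 (fun v => `|f v| / y v)). Qed.

Lemma wnorm_le f c : 0 <= c -> (forall v, `|f v| <= c * y v) -> wnorm f <= c.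
Proof. by move=> c0 fc; apply: bigmax_le => // v _; rewrite ler_pdivrMr. Qed.

Lemma cvgn_weighted_bounded (b : nat -> V -> R) : (forall v, cvgn (b^~ v)) ->
  exists M, 0 <= M /\ forall t v, `|b t v| <= M * y v.
Proof.
move=> b_cvg.
have bnd : \forall M \near +oo, forall v t, `|b t v| <= M * y v.
  apply: filter_forall => v.
  have [M0 [_ bM0]] := cvg_seq_bounded (is_cvgM (b_cvg v) (is_cvg_cst (y v)^-1)).
  exists M0; split => [|M M0M t]; first exact: num_real.
  rewrite -ler_pdivrMr //.
  by have := bM0 M M0M t I; rewrite /= normrM normfV (gtr0_norm (y_gt0 v)).
have [M [M0 HM]] := filter_ex (filterI (nbhs_pinfty_ge (@real0 _)) bnd).
by exists M.
Qed.

End WeightedSupNorm.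

Arguments wnorm_ge0 {R V y}.
Arguments ler_wnorm {R V y}.
Arguments wnorm_le {R V y}.
Arguments cvgn_weighted_bounded {R V y}.

Section AffineRecursion.
Context {R : realType} {V : finType}.
Variables (A : nat -> V -> V -> R) (b x : nat -> V -> R) (y : V -> R)
  (lam : R) (T : nat).
Hypotheses (A_ge0 : forall t v w, 0 <= A t v w)
  (A_cvg : forall v w, cvgn (fun t => A t v w))
  (b_cvg : forall v, cvgn (fun t => b t v))
  (x_rec : forall t v, x t.+1 v = b t v + \sum_w A t v w * x t w)
  (y_gt0 : forall v, 0 < y v) (lam_ge0 : 0 <= lam) (lam_lt1 : lam < 1)
  (A_contr : forall t, (T <= t)%N -> forall v, \sum_w A t v w * y w <= lam * y v).

Lemma norm_sum_contract t f v : (T <= t)%N ->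
  `|\sum_w A t v w * f w| <= lam * wnorm y f * y v.
Proof.
move=> Tt; apply: le_trans (ler_norm_sum _ _ _) _.
apply: (@le_trans _ _ (wnorm y f * \sum_w A t v w * y w)).
  rewrite mulr_sumr; apply: ler_sum => w _; rewrite normrM ger0_norm //.
  by rewrite mulrCA; apply: ler_wpM2l => //; exact: ler_wnorm.
by rewrite -mulrA mulrCA; apply: ler_wpM2l; [exact: wnorm_ge0 | exact: A_contr].
Qed.

Lemma iterate_wnorm_bounded : exists K, forall t, (T <= t)%N -> wnorm y (x t) <= K.
Proof.
have [Mb [Mb0 bMb]] := cvgn_weighted_bounded y_gt0 _ b_cvg.
apply: (@affine_ineq_bounded _ _ lam Mb T) => [|t Tt]; first by rewrite lam_ge0.
apply: wnorm_le => // [|v].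
  by rewrite addr_ge0 ?mulr_ge0 ?(wnorm_ge0 y_gt0).
rewrite x_rec mulrDl; apply: le_trans (ler_normD _ _) _.
by rewrite lerD ?bMb ?norm_sum_contract.
Qed.

Lemma iterate_diff_step K m n v : (T <= m)%N -> (T <= n)%N ->
  (forall t w, (T <= t)%N -> `|x t w| <= K * y w) ->
  `|x m.+1 v - x n.+1 v| <= lam * wnorm y (fun w => x m w - x n w) * y v
    + (`|b m v - b n v| + \sum_w `|A m v w - A n v w| * (K * y w)).
Proof.
move=> Tm Tn xKy.
have -> : x m.+1 v - x n.+1 v = (b m v - b n v)
    + \sum_w A m v w * (x m w - x n w) + \sum_w (A m v w - A n v w) * x n w.
  have E : \sum_w A m v w * (x m w - x n w) + \sum_w (A m v w - A n v w) * x n w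
      = \sum_w A m v w * x m w - \sum_w A n v w * x n w.
    by rewrite -big_split -sumrB; apply: eq_bigr => w _ /=; ring.
  by rewrite !x_rec -[RHS]addrA E; ring.
have Sdiff : `|\sum_w (A m v w - A n v w) * x n w|
    <= \sum_w `|A m v w - A n v w| * (K * y w).
  apply: le_trans (ler_norm_sum _ _ _) _; apply: ler_sum => w _.
  by rewrite normrM; apply: ler_wpM2l => //; exact: xKy.
have := norm_sum_contract m (fun w => x m w - x n w) v Tm.
have := ler_normD (b m v - b n v + \sum_w A m v w * (x m w - x n w))
  (\sum_w (A m v w - A n v w) * x n w).
have := ler_normD (b m v - b n v) (\sum_w A m v w * (x m w - x n w)).
lra.
Qed.

Lemma iterate_wnorm_cauchy e : 0 < e ->
  \forall m & n \near \oo, wnorm y (fun v => x m v - x n v) <= e.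
Proof.
have [K xK] := iterate_wnorm_bounded.
have K0 : 0 <= K := le_trans (wnorm_ge0 y_gt0 _) (xK T (leqnn T)).
have xKy t v : (T <= t)%N -> `|x t v| <= K * y v.
  move=> Tt; apply: le_trans (ler_wnorm y_gt0 (x t) v) _.
  by apply: ler_wpM2r; [exact: ltW | exact: xK].
pose err_at m n v := `|b m v - b n v| + \sum_w `|A m v w - A n v w| * (K * y w).
pose err m n := \sum_v err_at m n v / y v.
have err_cvg0 : err mn.1 mn.2 @[mn --> (\oo, \oo)] --> 0.
  have -> : 0 = \sum_v (`|0 : R| + \sum_w `|0 : R| * (K * y w)) / y v.
    rewrite big1 // => v _.
    by rewrite big1 ?normr0 ?add0r ?mul0r // => w _; rewrite mul0r.
  apply: cvg_sumr => v; apply: cvgM (cvg_cst _).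
  apply: cvgD; first by apply: (@cvg_norm _ R^o); exact: cvg_pair_sub0 (b_cvg v).
  apply: cvg_sumr => w; apply: cvgM (cvg_cst _).
  by apply: (@cvg_norm _ R^o); exact: cvg_pair_sub0 (A_cvg v w).
have err_at_le m n v : err_at m n v <= err m n * y v.
  rewrite -ler_pdivrMr //; apply: (ler_sum_term (fun u => err_at m n u / y u)) => u.
  apply: divr_ge0 (ltW (y_gt0 u)); apply: addr_ge0 => //.
  by apply: sumr_ge0 => w _; rewrite mulr_ge0 // mulr_ge0 // ltW.
apply: (@contraction_pair_small _ _ lam (K + K)); first by rewrite lam_ge0.
  apply/near_oo2P; exists T => m n Tm Tn.
  apply: (wnorm_le y_gt0) => [|v]; first exact: addr_ge0.
  by rewrite mulrDl; apply: le_trans (ler_normB _ _) _; apply: lerD; exact: xKy.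
move=> d d0.
have /near_oo2P[N errN] : \forall m & n \near \oo, err m n <= d.
  exact: cvgr_le err_cvg0 _ d0.
apply/near_oo2P; exists (maxn N T) => m n.
rewrite !geq_max => /andP[Nm Tm] /andP[Nn Tn].
apply: (wnorm_le y_gt0) => [|v].
  by apply: addr_ge0; [apply: mulr_ge0 => //; exact: wnorm_ge0 | exact: ltW].
apply: le_trans (iterate_diff_step K m n v Tm Tn xKy) _.
have := ler_wpM2r (ltW (y_gt0 v)) (errN m n Nm Nn).
have := err_at_le m n v; rewrite /err_at; lra.
Qed.

Theorem affine_recursion_cvg v : cvgn (fun t => x t v).
Proof.
apply: cauchy_le_cvgn => e e0.
move: (iterate_wnorm_cauchy _ (divr_gt0 e0 (y_gt0 v))); apply: filterS => -[m n] /= Dmn.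
apply: le_trans (ler_wnorm y_gt0 (fun v => x m v - x n v) v) _.
by rewrite -ler_pdivlMr.
Qed.

End AffineRecursion.

Lemma eventually_contracting {R : realType} {V : finType}
    (A : nat -> V -> V -> R) (Ainf : V -> V -> R) (y : V -> R) :
  (forall v w, (fun t => A t v w) @ \oo --> Ainf v w) -> (forall v, 0 < y v) ->
  (forall v, \sum_w Ainf v w * y w < y v) ->
  exists lam T, [/\ 0 <= lam, lam < 1 &
    forall t, (T <= t)%N -> forall v, \sum_w A t v w * y w <= lam * y v].
Proof.
move=> A_cvg y_gt0 Ay.
pose rho v := (\sum_w Ainf v w * y w) / y v.
have rho_lt1 v : rho v < 1 by rewrite ltr_pdivrMr // mul1r.
pose lam := \big[Num.max/0]_v ((1 + rho v) / 2).
have lam_lt1 : lam < 1.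
  by apply: bigmax_lt => // v _; have := rho_lt1 v; lra.
have Ainf_lam v : \sum_w Ainf v w * y w < lam * y v.
  rewrite -ltr_pdivrMr //; apply: (@lt_le_trans _ _ ((1 + rho v) / 2)).
    by have := rho_lt1 v; rewrite /rho; lra.
  exact: (le_bigmax 0 (fun v => (1 + rho v) / 2)).
have : \forall t \near \oo, forall v, \sum_w A t v w * y w < lam * y v.
  apply: filter_forall => v; apply: cvgr_lt (Ainf_lam v).
  by apply: cvg_sumr => w; apply: cvgM (cvg_cst _).
case=> T _ AT; exists lam, T; split => // [|t Tt v].
  by rewrite /lam bigmax_idl le_max lexx.
exact/ltW/AT.
Qed.

Lemma connect_ind_rev {T : finType} (e : rel T) (P : T -> Prop) z :
  P z -> (forall x y, e x y -> P y -> P x) -> forall x, connect e x z -> P x.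
Proof.
move=> Pz eP x /connectP[p]; elim: p x => [|y p IH] x /=; first by move=> _ <-.
by move=> /andP[exy ep] zl; apply: eP exy _; exact: IH ep zl.
Qed.

Section StrictSupersolution.
Context {R : realType} {V : finType}.
Variables (Phi : rel V) (Q : V -> V -> R) (u : V -> R) (v0 : V).

Let Qmul (f : V -> R) v := \sum_w Q v w * f w.

Hypotheses (Q_ge0 : forall v w, 0 <= Q v w) (u_ge0 : forall v, 0 <= u v)
  (u_super : forall v, \sum_w Q v w * u w <= u v)
  (u_strict : \sum_w Q v0 w * u w < u v0)
  (arc_pos : forall v w, Phi v w -> 0 < Q v w \/ \sum_w Q v w * u w < u v)
  (to_v0 : forall v, connect Phi v v0).

Let defect v := u v - Qmul u v.

Lemma defect_ge0 v : 0 <= defect v.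
Proof. by rewrite subr_ge0; exact: u_super. Qed.

Lemma Qpow_ge0 f : (forall w, 0 <= f w) -> forall k v, 0 <= iter k Qmul f v.
Proof.
move=> f_ge0 k; elim: k => [|k IH] v //=.
by apply: sumr_ge0 => w _; exact: mulr_ge0.
Qed.

Lemma Qpow_telescope k v : iter k Qmul u v - iter k.+1 Qmul u v = iter k Qmul defect v.
Proof.
elim: k v => [|k IH] v //=; rewrite /Qmul -sumrB; apply: eq_bigr => w _.
by rewrite -mulrBr IH.
Qed.

Lemma Qpow_defect_gt0 v : exists k, 0 < iter k Qmul defect v.
Proof.
apply: (connect_ind_rev Phi (fun v => exists k, 0 < iter k Qmul defect v)
  _ _ _ _ (to_v0 v)).
  by exists 0%N; rewrite /= /defect subr_gt0.
move=> x y /arc_pos[Qxy|strict_x] [k Hk]; last first.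
  by exists 0%N; rewrite /= /defect subr_gt0.
exists k.+1; apply: lt_le_trans (mulr_gt0 Qxy Hk) _.
apply: (ler_sum_term (fun w => Q x w * iter k Qmul defect w)) => w.
by apply: mulr_ge0 => //; exact: (Qpow_ge0 _ defect_ge0).
Qed.

(* The witness is y = Σ_(k < N) Q^k u: then y - Q y = Σ_(k < N) Q^k (u - Q u),
   and following a path to v0 shows that each coordinate of some Q^k (u - Q u)
   is positive. *)
Lemma strict_supersolution_exists :
  exists y, (forall v, 0 < y v) /\ forall v, \sum_w Q v w * y w < y v.
Proof.
have [N _ HN] : \forall N \near \oo, forall v,
    exists2 k, (k < N)%N & 0 < iter k Qmul defect v.
  apply: filter_forall => v; have [k Hk] := Qpow_defect_gt0 v.
  by exists k.+1 => // N kN; exists k.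
pose y v := \sum_(k < N) iter k Qmul u v.
have Qy v : Qmul y v = \sum_(k < N) iter k.+1 Qmul u v.
  rewrite /Qmul /y; under eq_bigr do rewrite mulr_sumr.
  by rewrite exchange_big.
have y_gap v : Qmul y v < y v.
  rewrite -subr_gt0 Qy /y -sumrB.
  under eq_bigr do rewrite Qpow_telescope.
  have [k kN Hk] := HN N (leqnn N) v.
  apply: lt_le_trans Hk _.
  apply: (ler_sum_term (fun k : 'I_N => iter k Qmul defect v) (Ordinal kN)) => i.
  exact: (Qpow_ge0 _ defect_ge0).
exists y; split=> // v; apply: le_lt_trans (y_gap v).
apply: sumr_ge0 => w _; apply: mulr_ge0 => //.
by apply: sumr_ge0 => k _; exact: (Qpow_ge0 _ u_ge0).
Qed.

End StrictSupersolution.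

Section Recursion.
Context {R : realType} {V : finType}.
Variables (Phi : rel V) (alpha beta : nat -> V -> R) (r s : V -> R).
Hypotheses (alpha_ge0 : forall t v, 0 <= alpha t v)
  (alpha_nd : forall t v, alpha t v <= alpha t.+1 v)
  (s_gt0 : forall v, 0 < s v) (rs : forall v, r v = (s v)^-1).

Local Notation M := (adjM R Phi).
Local Notation W := (Wmat Phi r s).
Local Notation omega := (omega_seq Phi r s alpha).
Local Notation eta := (eta_seq Phi r s alpha beta).
Local Notation omega_lim v := (limn (omega^~ v)).

Lemma adjM_ge0 v w : 0 <= M v w.
Proof. exact: ler0n. Qed.

Lemma Wmat_scale v w : s v * W v w = M v w * s w.
Proof. by rewrite /Wmat rs -mulrA mulVKf // gt_eqF. Qed.

Lemma Wmat_ge0 v w : 0 <= W v w.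
Proof.
by rewrite -(ler_pM2l (s_gt0 v)) mulr0 Wmat_scale mulr_ge0 ?adjM_ge0 ?ltW.
Qed.

Lemma Wmat_gt0 v w : Phi v w -> 0 < W v w.
Proof.
move=> vw; rewrite -(ltr_pM2l (s_gt0 v)) mulr0 Wmat_scale /adjM vw mul1r.
exact: s_gt0.
Qed.

Definition omega_den t v := 1 + alpha t v + \sum_w W v w * (1 - omega t w).

Lemma omegaS t v : omega t.+1 v = (omega_den t v)^-1.
Proof. by []. Qed.

Lemma omega_den_ge1 t v : (forall w, omega t w <= 1) -> 1 <= omega_den t v.
Proof.
move=> om_le1; have := alpha_ge0 t v.
have : 0 <= \sum_w W v w * (1 - omega t w).
  by apply: sumr_ge0 => w _; rewrite mulr_ge0 ?Wmat_ge0 // subr_ge0.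
rewrite /omega_den; lra.
Qed.

Lemma omega_in01 t v : 0 < omega t v <= 1.
Proof.
elim: t v => [|t IH] v; first by rewrite /= ltr01 lexx.
have den1 := omega_den_ge1 t v (fun w => proj2 (andP (IH w))).
by rewrite omegaS invr_gt0 invf_le1; lra.
Qed.

Lemma omega_gt0 t v : 0 < omega t v.
Proof. by case/andP: (omega_in01 t v). Qed.

Lemma omega_le1 t v : omega t v <= 1.
Proof. by case/andP: (omega_in01 t v). Qed.

Lemma omega_nonincreasing t v : omega t.+1 v <= omega t v.
Proof.
elim: t v => [|t IH] v; first exact: omega_le1.
have den1 tt := omega_den_ge1 tt v (omega_le1 tt).
rewrite !omegaS lef_pV2 ?posrE ?(lt_le_trans ltr01) //.
apply: lerD; first by rewrite lerD2l.
by apply: ler_sum => w _; rewrite ler_wpM2l ?Wmat_ge0 // lerD2l lerN2.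
Qed.

Lemma omega_cvg v : cvgn (omega^~ v).
Proof.
apply: nonincreasing_is_cvgn.
  by apply/nonincreasing_seqP => t; exact: omega_nonincreasing.
by exists 0 => _ [t _ <-]; exact/ltW/omega_gt0.
Qed.

Lemma omega_shift_cvg v : omega t.+1 v @[t --> \oo] --> omega_lim v.
Proof. by have := omega_cvg v; rewrite -cvg_shiftS. Qed.

Lemma omega_lim_ge0 v : 0 <= omega_lim v.
Proof. by apply: limr_ge (omega_cvg v) _; apply: nearW => t; exact/ltW/omega_gt0. Qed.

Lemma omega_lim_le1 v : omega_lim v <= 1.
Proof. by apply: limr_le (omega_cvg v) _; apply: nearW => t; exact: omega_le1. Qed.

Lemma omega_lim_fixpoint t0 v :
  omega_lim v * (1 + alpha t0 v + \sum_w W v w * (1 - omega_lim w)) <= 1.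
Proof.
have cv : omega t.+1 v * (1 + alpha t0 v + \sum_w W v w * (1 - omega t w)) @[t --> \oo]
    --> omega_lim v * (1 + alpha t0 v + \sum_w W v w * (1 - omega_lim w)).
  apply: cvgM; first exact: omega_shift_cvg.
  apply: cvgD; first exact: cvg_cst.
  apply: cvg_sumr => w; apply: cvgM; first exact: cvg_cst.
  by apply: cvgB; [exact: cvg_cst | exact: omega_cvg].
rewrite -(cvg_lim _ cv) //; apply: limr_le; first by apply/cvg_ex; eexists; exact: cv.
have alpha_mono : nondecreasing_seq (alpha^~ v).
  by apply/nondecreasing_seqP => t; exact: alpha_nd.
near=> t; have t0t : (t0 <= t)%N by near: t; exact: nbhs_infty_ge.
have den_gt0 : 0 < omega_den t v := lt_le_trans ltr01 (omega_den_ge1 t v (omega_le1 t)).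
apply: (@le_trans _ _ (omega t.+1 v * omega_den t v)).
  2: by rewrite omegaS mulVf ?gt_eqF.
apply: ler_wpM2l; first exact/ltW/omega_gt0.
by rewrite /omega_den !lerD2r lerD2l alpha_mono.
Unshelve. all: by end_near.
Qed.

Hypotheses (hSC : strongly_connected Phi) (hnz : exists v t, alpha t v != 0).

Lemma alpha_pos_somewhere : exists v0 t0, 0 < alpha t0 v0.
Proof. by case: hnz => v0 [t0 nz]; exists v0, t0; rewrite lt_def nz alpha_ge0. Qed.

Lemma omega_lim_lt1 u : omega_lim u < 1.
Proof.
have lt1 (x d : R) : 0 <= x -> 0 < d -> x * (1 + d) <= 1 -> x < 1.
  by move=> x0 d0 h; nra.
pose S x := \sum_w W x w * (1 - omega_lim w).
have S_ge0 x : 0 <= S x.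
  by apply: sumr_ge0 => w _; rewrite mulr_ge0 ?Wmat_ge0 // subr_ge0 omega_lim_le1.
have [v0 [t0 a0]] := alpha_pos_somewhere.
apply: (connect_ind_rev Phi (fun u => omega_lim u < 1) v0 _ _ u (hSC u v0).1).
  apply: (lt1 _ (alpha t0 v0 + S v0)).
  - exact: omega_lim_ge0.
  - by have := S_ge0 v0; lra.
  - by rewrite addrA; exact: omega_lim_fixpoint.
move=> x y xy y_lt1; apply: (lt1 _ (alpha 0 x + S x)).
- exact: omega_lim_ge0.
- have : W x y * (1 - omega_lim y) <= S x.
    apply: (ler_sum_term (fun w => W x w * (1 - omega_lim w))) => w.
    by rewrite mulr_ge0 ?Wmat_ge0 // subr_ge0 omega_lim_le1.
  have : 0 < W x y * (1 - omega_lim y) by rewrite mulr_gt0 ?Wmat_gt0 // subr_gt0.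
  have := alpha_ge0 0 x; lra.
- by rewrite addrA; exact: omega_lim_fixpoint.
Qed.

Lemma limit_supersolution t0 v :
  \sum_w omega_lim v * M v w * (s w * (1 - omega_lim w))
    <= s v * (1 - omega_lim v) - s v * (alpha t0 v * omega_lim v).
Proof.
have -> : \sum_w omega_lim v * M v w * (s w * (1 - omega_lim w))
    = s v * (omega_lim v * \sum_w W v w * (1 - omega_lim w)).
  rewrite !mulr_sumr; apply: eq_bigr => w _.
  by rewrite mulrA -(mulrA _ (M v w)) -Wmat_scale; ring.
rewrite -mulrBr ler_pM2l //; have := omega_lim_fixpoint t0 v; lra.
Qed.

Lemma limit_supersolution_strict t0 v : (omega_lim v == 0) || (0 < alpha t0 v) ->
  \sum_w omega_lim v * M v w * (s w * (1 - omega_lim w)) < s v * (1 - omega_lim v).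
Proof.
case: (eqVneq (omega_lim v) 0) => [-> _ | nz /= a_gt0].
  by rewrite big1 ?subr0 ?mulr1 // => w _; rewrite !mul0r.
apply: le_lt_trans (limit_supersolution t0 v) _; rewrite ltrBlDr ltrDl.
by rewrite !mulr_gt0 // lt_def nz omega_lim_ge0.
Qed.

Hypothesis beta_cvg : forall v, cvgn (beta^~ v).

Lemma etaS t v : eta t.+1 v = 1 + beta t v + \sum_w M v w * omega t w * eta t w.
Proof. by []. Qed.

Definition zeta t v := omega t v * eta t v.

Lemma zetaS t v : zeta t.+1 v =
  omega t.+1 v * (1 + beta t v) + \sum_w omega t.+1 v * M v w * zeta t w.
Proof.
rewrite /zeta etaS mulrDr mulr_sumr; congr (_ + _).
by apply: eq_bigr => w _; ring.
Qed.

Lemma zeta_limit_contraction : exists y : V -> R, (forall v, 0 < y v) /\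
  forall v, \sum_w omega_lim v * M v w * y w < y v.
Proof.
have [v0 [t0 a0]] := alpha_pos_somewhere.
apply: (@strict_supersolution_exists _ _ Phi _ (fun v => s v * (1 - omega_lim v)) v0).
- by move=> v w; apply: mulr_ge0 (adjM_ge0 v w); exact: omega_lim_ge0.
- move=> v; apply: mulr_ge0; first exact: ltW.
  by rewrite subr_ge0 omega_lim_le1.
- move=> v; apply: le_trans (limit_supersolution t0 v) _; rewrite gerBl.
  by apply: mulr_ge0; [exact: ltW | apply: mulr_ge0 => //; exact: omega_lim_ge0].
- by apply: (limit_supersolution_strict t0); rewrite a0 orbT.
- move=> v w vw; case: (eqVneq (omega_lim v) 0) => [om_v0 | nz].
    by right; apply: (limit_supersolution_strict 0); rewrite om_v0 eqxx.
  by left; rewrite /adjM vw mulr1 lt_def nz omega_lim_ge0.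
- by move=> v; exact: (hSC v v0).1.
Qed.

Lemma zeta_cvg v : cvgn (zeta^~ v).
Proof.
have [y [y_gt0 Ay]] := zeta_limit_contraction.
have A_cvg v' w : (fun t => omega t.+1 v' * M v' w) @ \oo --> omega_lim v' * M v' w.
  exact: cvgM (omega_shift_cvg v') (cvg_cst _).
have [lam [T [lam_ge0 lam_lt1 contr]]] := eventually_contracting _ _ _ A_cvg y_gt0 Ay.
apply: (@affine_recursion_cvg _ _ (fun t v w => omega t.+1 v * M v w)
  (fun t v => omega t.+1 v * (1 + beta t v)) zeta y lam T) => //.
- by move=> t v' w; rewrite mulr_ge0 ?adjM_ge0 // ltW ?omega_gt0.
- by move=> v' w; apply/cvg_ex; eexists; exact: A_cvg.
- move=> v'; apply/cvg_ex; eexists.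
  exact: cvgM (omega_shift_cvg v') (cvgD (cvg_cst _) (beta_cvg v')).
- exact: zetaS.
Qed.

Theorem eta_cvg v : cvgn (eta^~ v).
Proof.
have eta_shift : eta t.+1 v @[t --> \oo] -->
    1 + limn (beta^~ v) + \sum_w M v w * limn (zeta^~ w).
  apply: cvgD; first exact: cvgD (cvg_cst _) (beta_cvg v).
  apply: cvg_sumr => w; under eq_cvg do rewrite -mulrA.
  exact: cvgM (cvg_cst _) (zeta_cvg w).
by apply/cvg_ex; eexists; rewrite -cvg_shiftS; exact: eta_shift.
Qed.

End Recursion.

Theorem lemma4 (R : realType) (V : finType) (Phi : rel V)
    (alpha beta : nat -> V -> R) (r s : V -> R)
    (alpha_ge0 : forall t v, 0 <= alpha t v)
    (beta_ge0 : forall t v, 0 <= beta t v)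
    (alpha_nd : forall t v, alpha t v <= alpha t.+1 v)
    (beta_cvg : forall v, cvg ((fun t => beta t v) @ \oo))
    (r_gt0 : forall v, 0 < r v) (s_gt0 : forall v, 0 < s v)
    (rs : forall v, r v = (s v)^-1)
    (hSC : strongly_connected Phi)
    (hnz : exists v, exists t, alpha t v != 0) :
  (forall u, cvg ((fun t => omega_seq Phi r s alpha t u) @ \oo)) /\
  (forall u, cvg ((fun t => eta_seq Phi r s alpha beta t u) @ \oo)) /\
  (forall u, (forall t, omega_seq Phi r s alpha t.+1 u <= omega_seq Phi r s alpha t u) /\
             lim ((fun t => omega_seq Phi r s alpha t u) @ \oo) < 1).
Proof.
split; first by move=> u; apply: omega_cvg.
split; first by move=> u; apply: eta_cvg.
move=> u; split; first by move=> t; apply: omega_nonincreasing.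
exact: omega_lim_lt1.
Qed.
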